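(* Let $G$ be a finite transitive permutation group on a set $\Omega$, let $\alpha\in\Omega$, and let $x\in G_\alpha$ have prime order. Then $x$ is quasi-semiregular on $\Omega$ if and only if $\mathrm{Sub}_G(x)\le G_\alpha$.
   Context: For $x\in G$, the subnormaliser is $\mathrm{Sub}_G(x)=\langle g\in G : \langle x\rangle \text{ is subnormal in } \langle x,g\rangle\rangle$. A permutation $g$ is quasi-semiregular if $\langle g\rangle$ has a unique fixed point and acts semiregularly (only the identity fixes a point) on the remaining points. *)

From mathcomp Require Import all_boot all_fingroup all_solvable.
Set Implicit Arguments. Unset Strict Implicit. Unset Printing Implicit Defensive.
Local Open Scope group_scope.

Definition subnormaliser (gT : finGroupType) (G : {set gT}) (x : gT) : {set gT} :=
  <<[set g in G | <[x]> <|<| <<[set x; g]>> ]>>.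

Definition quasi_semiregular (T : finType) (g : {perm T}) : Prop :=
  exists a : T,
    [/\ forall h, h \in <[g]> -> h a = a,
        forall b, (forall h, h \in <[g]> -> h b = b) -> b = a
      & forall b h, b != a -> h \in <[g]> -> h b = b -> h = 1].

From mathcomp Require Import all_boot all_fingroup all_solvable.
Set Implicit Arguments. Unset Strict Implicit. Unset Printing Implicit Defensive.
Local Open Scope group_scope.

(* If x fixes only alpha, the stabiliser of alpha propagates along any subnormal
   series starting at <x>: a normal overgroup B of a subgroup A <= G_alpha
   containing x conjugates x inside A, so B moves alpha to another fixed point
   of x, i.e. to alpha itself.  Conversely, let Q be a Sylow p-subgroup
   containing x (p = #[x]).  As Q is nilpotent, <x> is subnormal in <x, g> for
   every g in N_G(Q), so N_G(Q) <= Sub_G(x) <= G_alpha.  If x also fixed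
   beta != alpha, transitivity lets us choose Q inside G_alpha and G_beta, and
   Sylow in both; then Sylow conjugacy in G_beta gives n in N_G(Q) mapping
   alpha to beta, contradicting N_G(Q) <= G_alpha. *)

Section SubnormaliserFacts.

Variable gT : finGroupType.
Implicit Types (G H Q : {group gT}) (x g : gT).

Lemma subnormaliser_sub G x : subnormaliser G x \subset G.
Proof. by rewrite gen_subG; apply/subsetP=> g; rewrite inE => /andP[]. Qed.

Lemma cycle_subnormal_join_norm Q x g :
  nilpotent Q -> x \in Q -> g \in 'N(Q) -> <[x]> <|<| <<[set x; g]>>.
Proof.
move=> nilQ xQ nQg; set L := <<Q :|: [set g]>>.
have sQL : Q \subset L by rewrite sub_gen ?subsetUl.
have nQL : L \subset 'N(Q) by rewrite gen_subG subUset normG sub1set.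
have snL : <[x]> <|<| L.
  have snQ : <[x]> <|<| Q by rewrite nilpotent_subnormal ?cycle_subG.
  by apply: subnormal_trans snQ (normal_subnormal _); apply/andP.
have sKL : <<[set x; g]>> \subset L by rewrite genS // setSU // sub1set.
have := setI_subnormal sKL snL.
by rewrite (setIidPl _) // cycle_subG mem_gen // !inE eqxx.
Qed.

Lemma norm_sub_subnormaliser G Q x :
  nilpotent Q -> x \in Q -> 'N_G(Q) \subset subnormaliser G x.
Proof.
move=> nilQ xQ; apply/subsetP=> g /setIP[Gg nQg].
by rewrite mem_gen // inE Gg (cycle_subnormal_join_norm nilQ).
Qed.

End SubnormaliserFacts.

Section UniqueFixedPoint.

Variables (gT : finGroupType) (T : finType) (to : {action gT &-> T}).
Variables (x : gT) (a : T).
Hypothesis fix_x : 'Fix_to[x] = [set a].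

Lemma normal_sub_astab1 (A B : {group gT}) :
  x \in A -> A \subset 'C[a | to] -> A <| B -> B \subset 'C[a | to].
Proof.
move=> Ax sAC /andP[_ nAB]; apply/subsetP=> b Bb.
have xbC : x \in 'C[to a b | to].
  rewrite astab1_act mem_conjg (subsetP sAC) // memJ_norm //.
  by rewrite (subsetP nAB) ?groupV.
have : to a b \in 'Fix_to[x] by apply/afix1P; apply/astab1P.
by rewrite fix_x => /set1P ab; apply/astab1P.
Qed.

Lemma subnormal_sub_astab1 (H : {group gT}) :
  <[x]> <|<| H -> H \subset 'C[a | to].
Proof.
case/subnormalP=> s + <-.
have: x \in gval <[x]>%G by exact: cycle_id.
have: gval <[x]>%G \subset 'C[a | to].
  by rewrite cycle_subG; apply/astab1P/afix1P; rewrite fix_x set11.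
elim: s <[x]>%G => //= B s IHs A sAC xA /andP[nAB snB].
by apply: IHs snB; [exact: normal_sub_astab1 nAB | exact: subsetP (normal_sub nAB) x xA].
Qed.

Lemma subnormaliser_sub_astab1 (G : {group gT}) :
  subnormaliser G x \subset 'C[a | to].
Proof.
rewrite gen_subG; apply/subsetP=> g; rewrite inE => /andP[_ /subnormal_sub_astab1].
by move/subsetP; apply; rewrite mem_gen // !inE eqxx orbT.
Qed.

End UniqueFixedPoint.

Section SylowStabilisers.

Variables (gT : finGroupType) (T : finType) (to : {action gT &-> T}).
Variables (p : nat) (G : {group gT}).
Implicit Types (P Q X : {group gT}) (a b : T).

Lemma astab1_act_in a h : h \in G -> 'C_G[to a h | to] = 'C_G[a | to] :^ h.
Proof. by move=> Gh; rewrite conjIg conjGid // astab1_act. Qed.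

Lemma sylow_astab1_superset P X a b :
    p.-Sylow(G) P -> P \subset 'C[a | to] -> b \in orbit to G a ->
    X \subset 'C_G[b | to] -> p.-group X ->
  exists Q, [/\ p.-Sylow(G) Q, X \subset Q & Q \subset 'C[b | to]].
Proof.
move=> sylP sPa /orbitP[h Gh <-] sXb pX.
have sylPh : p.-Sylow('C_G[to a h | to]) (P :^ h).
  apply: pHall_subl _ (subsetIl _ _) _; last by rewrite pHallJ.
  by rewrite /= astab1_act_in // conjSg subsetI (pHall_sub sylP).
have [k Gbk sXPhk] := Sylow_subJ sylPh sXb pX.
exists ((P :^ h)%G :^ k)%G; split=> //; first by rewrite !pHallJ //; case/setIP: Gbk.
apply: subset_trans (subsetIr G _).
by rewrite -(conjGid Gbk) conjSg (pHall_sub sylPh).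
Qed.

Lemma sylow_astab1_orbit Q a b :
    p.-Sylow('C_G[a | to]) Q -> p.-Sylow('C_G[b | to]) Q -> b \in orbit to G a ->
  exists2 n, n \in 'N_G(Q) & to a n = b.
Proof.
move=> sylQa sylQb /orbitP[h Gh defb]; rewrite -defb in sylQb *.
have sylQh : p.-Sylow('C_G[to a h | to]) (Q :^ h) by rewrite astab1_act_in // pHallJ2.
have [k /setIP[Gk /astab1P fixk] defQh] := Sylow_trans sylQb sylQh.
exists (h * k^-1); last by rewrite actM -{1}fixk actK.
rewrite inE groupM ?groupV //=; apply/normP.
by rewrite conjsgM defQh -conjsgM mulgV conjsg1.
Qed.

End SylowStabilisers.

Section PrimeOrderStabiliser.

Variables (gT : finGroupType) (T : finType) (to : {action gT &-> T}).
Variables (G : {group gT}) (a : T) (x : gT).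
Hypotheses (trG : [transitive G, on [set: T] | to]) (Gax : x \in 'C_G[a | to]).
Hypothesis prime_x : prime #[x].

Lemma afix1_eq_of_subnormaliser :
  subnormaliser G x \subset 'C[a | to] -> 'Fix_to[x] = [set a].
Proof.
move=> sSa; have /setIP[Gx Cax] := Gax; set p := #[x].
have px : p.-group <[x]> by rewrite /pgroup -orderE pnat_id.
have norm_sub (Q : {group gT}) : p.-Sylow(G) Q -> x \in Q -> 'N_G(Q) \subset 'C[a | to].
  move=> sylQ Qx; apply: subset_trans _ sSa.
  exact: norm_sub_subnormaliser (pgroup_nil (pHall_pgroup sylQ)) Qx.
have sylow_sub (Q : {group gT}) : p.-Sylow(G) Q -> x \in Q -> Q \subset 'C[a | to].
  move=> sylQ Qx; apply: subset_trans (norm_sub Q sylQ Qx).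
  by rewrite subsetI (pHall_sub sylQ) normG.
have [P sylP sxP] : {P : {group gT} | p.-Sylow(G) P & <[x]> \subset P}.
  by apply: Sylow_superset px; rewrite cycle_subG.
apply/eqP; rewrite eqEsubset sub1set andbC; apply/andP; split.
  by apply/afix1P/astab1P.
apply/subsetP=> b /afix1P xb; rewrite inE; apply/eqP.
have Gab : b \in orbit to G a by rewrite (atransP trG) ?inE.
have sPa : P \subset 'C[a | to] by apply: sylow_sub sylP _; rewrite -cycle_subG.
have sxGb : <[x]> \subset 'C_G[b | to] by rewrite cycle_subG inE Gx; apply/astab1P.
have [Q [sylQ sxQ sQb]] := sylow_astab1_superset sylP sPa Gab sxGb px.
have Qx : x \in Q by rewrite -cycle_subG.
have sylQ_stab c : Q \subset 'C[c | to] -> p.-Sylow('C_G[c | to]) Q.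
  by move=> sQc; rewrite (pHall_subl _ (subsetIl G _) sylQ) // subsetI (pHall_sub sylQ).
have [n nQn <-] := sylow_astab1_orbit (sylQ_stab a (sylow_sub Q sylQ Qx)) (sylQ_stab b sQb) Gab.
by apply/astab1P; apply: subsetP (norm_sub Q sylQ Qx) n nQn.
Qed.

Lemma afix1_eq_subnormaliserP :
  'Fix_to[x] = [set a] <-> subnormaliser G x \subset 'C_G[a | to].
Proof.
split=> [fix_x | ]; first by rewrite subsetI subnormaliser_sub subnormaliser_sub_astab1.
by rewrite subsetI => /andP[_]; exact: afix1_eq_of_subnormaliser.
Qed.

End PrimeOrderStabiliser.

Lemma quasi_semiregular_prime (T : finType) (x : {perm T}) (a : T) :
  prime #[x] -> x a = a -> quasi_semiregular x <-> 'Fix_'P[x] = [set a].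
Proof.
move=> prx xa.
have fixP b : reflect (forall h, h \in <[x]> -> h b = b) (b \in 'Fix_'P[x]).
  by rewrite -afix_cycle; apply: (iffP afixP) => fb h /fb; rewrite /= apermE.
split=> [[c [fixc onlyc _]] | fix_x].
  have ca : c = a by apply/esym/onlyc/fixP/afix1P.
  apply/setP=> b; rewrite inE -ca; apply/idP/eqP => [/fixP/onlyc // | ->].
  exact/fixP.
exists a; split=> [|b /fixP|b h nba xh hb].
- by apply/fixP; rewrite fix_x set11.
- by rewrite fix_x => /set1P.
apply/eqP; apply: contraNT nba => nth.
have defx : <[x]> = <[h]> by apply: nt_gen_prime; rewrite ?inE ?nth // -orderE.
have : b \in 'Fix_'P[x] by rewrite -afix_cycle defx afix_cycle; apply/afix1P.
by rewrite fix_x => /set1P ->.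
Qed.

Theorem theorem3p3 (T : finType) (G : {group {perm T}}) (alpha : T) (x : {perm T}) :
  [transitive G, on [set: T] | 'P] ->
  x \in 'C_G[alpha | 'P] ->
  prime #[x] ->
  (quasi_semiregular x <-> subnormaliser G x \subset 'C_G[alpha | 'P]).
Proof.
move=> trG Gax prx.
have xa : x alpha = alpha by case/setIP: Gax => _ /astab1P.
apply: iff_trans (quasi_semiregular_prime prx xa) _.
exact: afix1_eq_subnormaliserP.
Qed.
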